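(* Let $g(m)=10^{m/5}$ and \[ f(m)=\begin{cases} \binom{m}{2} & \text{if } 1\le m\le 8;\\ \binom{\lfloor m/2\rfloor}{2}\binom{\lceil m/2\rceil}{2}-(\lfloor m/2\rfloor-1)(\lceil m/2\rceil-1)+1 & \text{if } 9\le m\le 13;\\ 10^{\frac{m-1}{5}}+\frac{m+144}{30}\cdot 6^{\frac{m-6}{5}} & \text{if } 14\le m\le 30;\\ 10^{\frac{m-1}{5}}+\frac{m-1}{5}\cdot 6^{\frac{m-6}{5}} & \text{if } m\ge 31. \end{cases} \] Let $n\ge 14$ be an integer. Then: (1) for $r\in\{4,5,6\}$, $\binom{r-1}{2}f(n-r)+(r-1)f(n-r-1)+g(n-r-2)<f(n)$; (2) for $r\in\{4,5,6\}$, $\binom{r-1}{2}f(n-r)+r\,g(n-r-2)+g(n-r-3)<f(n)$; (3) for $r\in\{4,6\}$, $\binom{r-1}{2}f(n-r)+(r-1)g(n-r-1)+6^{\frac{n-r-1}{5}}<f(n)$; (4) for $r\in\{4,6\}$, $\binom{r-1}{2}f(n-r)+\frac{f(4)}{g(4)}(r-1)g(n-r-1)+g(n-r-3)<f(n)$. *)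

From Stdlib Require Import Reals Lra Lia.
Open Scope R_scope.

Definition gP (m : nat) : R := Rpower 10 (INR m / 5).

Definition fP (m : nat) : R :=
  if (m <=? 8)%nat then C m 2
  else if (m <=? 13)%nat then
    let a := (m / 2)%nat in
    let b := ((m + 1) / 2)%nat in
    C a 2 * C b 2 - (INR a - 1) * (INR b - 1) + 1
  else if (m <=? 30)%nat then
    Rpower 10 ((INR m - 1) / 5) + (INR m + 144) / 30 * Rpower 6 ((INR m - 6) / 5)
  else
    Rpower 10 ((INR m - 1) / 5) + (INR m - 1) / 5 * Rpower 6 ((INR m - 6) / 5).

(** With [x = 10^(1/5)] and [y = 6^(1/5)], every term of the four inequalities is a
    rational multiple of [x^k], [y^k] or [k y^k], and a power of exponent [5q + j]
    reduces to [10^q x^j] or [6^q y^j] with [j < 5].  For [14 <= n <= 37] this leaves,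
    for each [n] and [r], a linear inequality in [x, ..., x^4, y, ..., y^4], settled by
    rational enclosures of [x] and [y].  For [n = 38 + m] all arguments of [f] lie in
    the last regime, so each inequality is linear in [x^m], [y^m] and [m y^m] with
    coefficients polynomial in [x] and [y]; the term [m y^m] is absorbed by the leading
    [x^m] term through [(m + 37) y^m <= 37 x^m]. *)

From Stdlib Require Import Reals Lra Lia Factorial.
Open Scope R_scope.

Definition root5 (b : R) : R := Rpower b (1 / 5).

Lemma Rpower_INR_div5 (b : R) (k : nat) : 0 < b -> Rpower b (INR k / 5) = root5 b ^ k.
Proof.
  intros hb; unfold root5.
  rewrite <- Rpower_pow by (unfold Rpower; apply exp_pos).
  rewrite Rpower_mult; f_equal; lra.
Qed.

Lemma root5_gt0 (b : R) : 0 < root5 b.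
Proof. apply exp_pos. Qed.

Lemma root5_pow5 (b : R) : 0 < b -> root5 b ^ 5 = b.
Proof.
  intros hb; rewrite <- Rpower_INR_div5 by exact hb.
  replace (INR 5 / 5) with 1 by (simpl; lra).
  exact (Rpower_1 b hb).
Qed.

(* Stated with [S] so that it rewrites powers with numeral exponents. *)
Lemma root5_pow_add5 (b : R) (k : nat) :
  0 < b -> root5 b ^ S (S (S (S (S k)))) = b * root5 b ^ k.
Proof.
  intros hb; change (S (S (S (S (S k))))) with (5 + k)%nat.
  rewrite pow_add, root5_pow5 by exact hb; reflexivity.
Qed.

Lemma gP_root5 (k : nat) : gP k = root5 10 ^ k.
Proof. apply Rpower_INR_div5; lra. Qed.

Lemma Rpower6_root5 (k : nat) : Rpower 6 (INR k / 5) = root5 6 ^ k.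
Proof. apply Rpower_INR_div5; lra. Qed.

Lemma pow_eq_enclosure (x c lo hi : R) (n : nat) :
  0 <= lo <= hi -> 0 <= x -> x ^ n = c -> lo ^ n < c < hi ^ n -> lo <= x <= hi.
Proof.
  intros hlohi hx hxc [hloc hchi]; split; apply Rnot_lt_le; intros hlt.
  - assert (x ^ n <= lo ^ n) by (apply pow_incr; lra). lra.
  - assert (hi ^ n <= x ^ n) by (apply pow_incr; lra). lra.
Qed.

Lemma root5_10_enclosure : 15848931 / 10000000 <= root5 10 <= 15848932 / 10000000.
Proof.
  apply (pow_eq_enclosure _ 10 _ _ 5); try lra.
  - apply Rlt_le, root5_gt0.
  - apply root5_pow5; lra.
Qed.

Lemma root5_6_enclosure : 14309690 / 10000000 <= root5 6 <= 14309691 / 10000000.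
Proof.
  apply (pow_eq_enclosure _ 6 _ _ 5); try lra.
  - apply Rlt_le, root5_gt0.
  - apply root5_pow5; lra.
Qed.

Lemma C_2 (k : nat) : (2 <= k)%nat -> C k 2 = INR k * (INR k - 1) / 2.
Proof.
  intros hk; destruct k as [|[|k]]; try lia.
  unfold C; replace (S (S k) - 2)%nat with k by lia.
  change (fact (S (S k))) with (S (S k) * (S k * fact k))%nat.
  rewrite !mult_INR, !S_INR; simpl (fact 2); simpl INR.
  field; apply INR_fact_neq_0.
Qed.

Lemma fP_le8 (k : nat) : (2 <= k <= 8)%nat -> fP k = INR k * (INR k - 1) / 2.
Proof.
  intros hk; unfold fP.
  replace (k <=? 8)%nat with true by (symmetry; apply Nat.leb_le; lia).
  apply C_2; lia.
Qed.

Lemma fP_9_to_13 : fP 9 = 49 /\ fP 10 = 85 /\ fP 11 = 131 /\ fP 12 = 201 /\ fP 13 = 286.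
Proof.
  unfold fP; simpl Nat.leb; cbv iota; simpl Nat.div.
  rewrite !C_2 by lia; simpl INR; repeat split; lra.
Qed.

Lemma Rpower_fP_terms (t : nat) : (6 <= t)%nat ->
  Rpower 10 ((INR t - 1) / 5) = root5 10 ^ (t - 1) /\
  Rpower 6 ((INR t - 6) / 5) = root5 6 ^ (t - 6).
Proof.
  intros ht; split; rewrite <- Rpower_INR_div5, minus_INR by (lra || lia);
    f_equal; simpl; lra.
Qed.

Lemma fP_14_30 (t : nat) : (14 <= t <= 30)%nat ->
  fP t = root5 10 ^ (t - 1) + (INR t + 144) / 30 * root5 6 ^ (t - 6).
Proof.
  intros ht; unfold fP.
  replace (t <=? 8)%nat with false by (symmetry; apply Nat.leb_gt; lia).
  replace (t <=? 13)%nat with false by (symmetry; apply Nat.leb_gt; lia).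
  replace (t <=? 30)%nat with true by (symmetry; apply Nat.leb_le; lia).
  destruct (Rpower_fP_terms t) as [-> ->]; [lia | reflexivity].
Qed.

Lemma fP_ge31 (t : nat) : (31 <= t)%nat ->
  fP t = root5 10 ^ (t - 1) + (INR t - 1) / 5 * root5 6 ^ (t - 6).
Proof.
  intros ht; unfold fP.
  replace (t <=? 8)%nat with false by (symmetry; apply Nat.leb_gt; lia).
  replace (t <=? 13)%nat with false by (symmetry; apply Nat.leb_gt; lia).
  replace (t <=? 30)%nat with false by (symmetry; apply Nat.leb_gt; lia).
  destruct (Rpower_fP_terms t) as [-> ->]; [lia | reflexivity].
Qed.

Lemma fP4_div_gP4 : fP 4 / gP 4 = 3 / 5 * root5 10.
Proof.
  rewrite fP_le8, gP_root5 by lia; simpl INR.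
  pose proof (root5_gt0 10) as hx; pose proof (root5_pow5 10 ltac:(lra)) as hx5.
  set (x := root5 10) in *.
  replace (x ^ 4) with (10 / x) by (rewrite <- hx5; field; lra).
  field; lra.
Qed.

Lemma linear_mul_pow_le (x y c : R) (m : nat) :
  0 < y -> 0 < c -> (c + 1) * y <= c * x -> (INR m + c) * y ^ m <= c * x ^ m.
Proof.
  intros hy hc hyx.
  assert (hyx' : y <= x) by nra.
  induction m as [|m IH]; [simpl; lra|].
  rewrite S_INR; change (y ^ S m) with (y * y ^ m); change (x ^ S m) with (x * x ^ m).
  assert (y ^ m <= x ^ m) by (apply pow_incr; lra).
  pose proof (pow_lt x m ltac:(lra)).
  nra.
Qed.

Lemma root5_growth (m : nat) : (INR m + 37) * root5 6 ^ m <= 37 * root5 10 ^ m.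
Proof.
  pose proof root5_10_enclosure; pose proof root5_6_enclosure.
  apply linear_mul_pow_le; lra.
Qed.

Lemma mul_pow_enclosure (x lo hi p : R) (k : nat) :
  lo <= x <= hi -> 0 <= lo -> 0 <= p -> lo ^ k * p <= p * x ^ k <= hi ^ k * p.
Proof.
  intros hx hlo hp; rewrite (Rmult_comm p).
  split; apply Rmult_le_compat_r; try exact hp; apply pow_incr; lra.
Qed.

Lemma fP_ge31_add (m k : nat) : (31 <= k)%nat ->
  fP (m + k) = root5 10 ^ m * root5 10 ^ (k - 1)
               + (INR m + INR k - 1) / 5 * (root5 6 ^ m * root5 6 ^ (k - 6)).
Proof.
  intros hk; rewrite fP_ge31 by lia.
  replace (m + k - 1)%nat with (m + (k - 1))%nat by lia.
  replace (m + k - 6)%nat with (m + (k - 6))%nat by lia.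
  rewrite plus_INR, !pow_add; reflexivity.
Qed.

Definition recurrence_bounds (n : nat) : Prop :=
  (forall r : nat, (r = 4 \/ r = 5 \/ r = 6)%nat ->
     C (r - 1)%nat 2 * fP (n - r)%nat + INR (r - 1)%nat * fP (n - r - 1)%nat + gP (n - r - 2)%nat < fP n) /\
  (forall r : nat, (r = 4 \/ r = 5 \/ r = 6)%nat ->
     C (r - 1)%nat 2 * fP (n - r)%nat + INR r * gP (n - r - 2)%nat + gP (n - r - 3)%nat < fP n) /\
  (forall r : nat, (r = 4 \/ r = 6)%nat ->
     C (r - 1)%nat 2 * fP (n - r)%nat + INR (r - 1)%nat * gP (n - r - 1)%nat
       + Rpower 6 (INR (n - r - 1)%nat / 5) < fP n) /\
  (forall r : nat, (r = 4 \/ r = 6)%nat ->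
     C (r - 1)%nat 2 * fP (n - r)%nat + fP 4 / gP 4 * INR (r - 1)%nat * gP (n - r - 1)%nat
       + gP (n - r - 3)%nat < fP n).

(* Once [Nat.add_sub_assoc] has pushed the subtractions inside, they are closed. *)
Ltac reduce_nat_sub :=
  repeat rewrite <- Nat.add_sub_assoc by lia;
  repeat match goal with |- context [(?a - ?b)%nat] =>
    let k := eval compute in (a - b)%nat in change (a - b)%nat with k end.

Ltac reduce_root5_powers :=
  rewrite ?gP_root5, ?Rpower6_root5, ?pow_add, ?plus_INR;
  reduce_nat_sub;
  repeat rewrite root5_pow_add5 by lra;
  rewrite ?pow_O; simpl INR.

Ltac enclose_powers hx p hp :=
  pose proof (mul_pow_enclosure _ _ _ p 1 hx ltac:(lra) hp);
  pose proof (mul_pow_enclosure _ _ _ p 2 hx ltac:(lra) hp);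
  pose proof (mul_pow_enclosure _ _ _ p 3 hx ltac:(lra) hp);
  pose proof (mul_pow_enclosure _ _ _ p 4 hx ltac:(lra) hp).

Ltac check_at_literal :=
  rewrite ?fP4_div_gP4; reduce_nat_sub; rewrite ?C_2 by lia;
  repeat match goal with |- context [fP ?k] =>
    first [ rewrite (fP_le8 k) by lia | rewrite (fP_14_30 k) by lia
          | rewrite (fP_ge31 k) by lia ] end;
  pose proof fP_9_to_13;
  reduce_root5_powers;
  enclose_powers root5_10_enclosure 1 Rle_0_1;
  enclose_powers root5_6_enclosure 1 Rle_0_1;
  (* [fP 4 / gP 4] contributes a factor [x], hence possibly [x * x^4 = 10]. *)
  pose proof (root5_pow5 10 ltac:(lra));
  lra.

Ltac for_each_r tac :=
  repeat split; intros r hr; repeat destruct hr as [hr|hr]; subst r; tac.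

Lemma recurrence_bounds_le37 (n : nat) : (14 <= n <= 37)%nat -> recurrence_bounds n.
Proof.
  intros hn.
  do 14 (destruct n as [|n]; [lia|]).
  do 24 (destruct n as [|n]; [for_each_r check_at_literal|]).
  lia.
Qed.

Ltac check_at_shift m :=
  rewrite ?fP4_div_gP4; reduce_nat_sub; rewrite ?C_2 by lia;
  rewrite !fP_ge31_add by lia;
  reduce_root5_powers;
  pose proof (root5_growth m); pose proof (pos_INR m);
  pose proof (pow_lt (root5 10) m (root5_gt0 10));
  pose proof (pow_lt (root5 6) m (root5_gt0 6));
  set (P := root5 10 ^ m) in *; set (Q := root5 6 ^ m) in *; set (N := INR m) in *;
  assert (hP : 0 <= P) by lra; assert (hQ : 0 <= Q) by lra;
  assert (hNQ : 0 <= N * Q) by (apply Rmult_le_pos; lra);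
  enclose_powers root5_10_enclosure P hP;
  enclose_powers root5_6_enclosure Q hQ;
  enclose_powers root5_6_enclosure (N * Q) hNQ;
  lra.

Lemma recurrence_bounds_ge38 (m : nat) : recurrence_bounds (m + 38).
Proof. for_each_r ltac:(check_at_shift m). Qed.

Theorem lemma2p11 (n : nat) (hn : (14 <= n)%nat) :
  (forall r : nat, (r = 4 \/ r = 5 \/ r = 6)%nat ->
     C (r - 1)%nat 2 * fP (n - r)%nat + INR (r - 1)%nat * fP (n - r - 1)%nat + gP (n - r - 2)%nat < fP n) /\
  (forall r : nat, (r = 4 \/ r = 5 \/ r = 6)%nat ->
     C (r - 1)%nat 2 * fP (n - r)%nat + INR r * gP (n - r - 2)%nat + gP (n - r - 3)%nat < fP n) /\
  (forall r : nat, (r = 4 \/ r = 6)%nat ->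
     C (r - 1)%nat 2 * fP (n - r)%nat + INR (r - 1)%nat * gP (n - r - 1)%nat
       + Rpower 6 (INR (n - r - 1)%nat / 5) < fP n) /\
  (forall r : nat, (r = 4 \/ r = 6)%nat ->
     C (r - 1)%nat 2 * fP (n - r)%nat + fP 4 / gP 4 * INR (r - 1)%nat * gP (n - r - 1)%nat
       + gP (n - r - 3)%nat < fP n).
Proof.
  change (recurrence_bounds n).
  destruct (Nat.le_gt_cases n 37) as [hle | hgt].
  - apply recurrence_bounds_le37; lia.
  - replace n with ((n - 38) + 38)%nat by lia.
    apply recurrence_bounds_ge38.
Qed.
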